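(* Let $G=(V,E,w)$ be a weighted digraph and $W=\sum_{e\in E}w(e)$. Then $\chi_w(G)\le 2\lfloor\sqrt{2W}\rfloor+1$.
   Context: A weighted digraph is $G=(V,E,w)$ with $w:E\to[0,1]$. A $k$-coloring is a map $c:V\to\{1,\dots,k\}$, and $c[v]$ denotes the set of vertices with color $c(v)$. For $S\subseteq V$, $d^-_S(v)=\sum_{u\in S,(u,v)\in E}w(u,v)$. A weighted improper $k$-coloring is a $k$-coloring with $d^-_{c[v]}(v)<1$ for every $v$; $\chi_w(G)$ is the minimum $k$ for which one exists. *)

From HB Require Import structures.
From mathcomp Require Import all_boot all_order all_algebra.
From mathcomp Require Import reals.
Set Implicit Arguments. Unset Strict Implicit. Unset Printing Implicit Defensive.
Import Order.TTheory GRing.Theory Num.Theory.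
Local Open Scope ring_scope.

Definition weighted_digraph (R : realType) (V : finType) (E : rel V)
  (w : V -> V -> R) : Prop :=
  irreflexive E /\ (forall u v, E u v -> 0 <= w u v <= 1).

Definition total_weight (R : realType) (V : finType) (E : rel V)
  (w : V -> V -> R) : R :=
  \sum_(u : V) \sum_(v : V | E u v) w u v.

Definition in_deg (R : realType) (V : finType) (E : rel V)
  (w : V -> V -> R) (S : {set V}) (v : V) : R :=
  \sum_(u in S | E u v) w u v.

Definition color_class (V : finType) (k : nat) (c : {ffun V -> 'I_k}) (v : V)
  : {set V} := [set u | c u == c v].

Definition weighted_improper (R : realType) (V : finType) (E : rel V)
  (w : V -> V -> R) (k : nat) (c : {ffun V -> 'I_k}) : bool :=
  [forall v, in_deg E w (color_class c v) v < 1].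

Definition w_colorable (R : realType) (V : finType) (E : rel V)
  (w : V -> V -> R) (k : nat) : bool :=
  [exists c : {ffun V -> 'I_k}, weighted_improper E w c].

(* chi_w(G): least k admitting a weighted improper k-colouring.  For a
   loop-free digraph, #|V| colours always suffice (proper colouring), so the
   minimum is attained in [0, #|V|]. *)
Definition chi_w (R : realType) (V : finType) (E : rel V)
  (w : V -> V -> R) : nat :=
  \big[minn/#|V|]_(k < #|V|.+1 | w_colorable E w k) (k : nat).

From HB Require Import structures.
From mathcomp Require Import all_boot all_order all_algebra.
From mathcomp Require Import reals.
From mathcomp Require Import zify.
Import Order.TTheory GRing.Theory Num.Theory.
Set Implicit Arguments. Unset Strict Implicit. Unset Printing Implicit Defensive.
Local Open Scope ring_scope.

(* Let n = floor (sqrt (2W)), and call a vertex heavy when its total (in plus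
   out) degree is at least n+1.  The degrees sum to 2W < (n+1)^2, so there are
   at most n heavy vertices; give each its own colour.  Colour the light
   vertices with n+1 further colours so as to minimise the total weight of
   monochromatic arcs.  At such a minimum, moving a light vertex v to any of
   the n+1 light colours does not decrease the weight between v and its own
   class; summing over these colours, (n+1) d^-_{c[v]}(v) <= deg v < n+1. *)

Section LocalSearch.
Variables (R : realType) (V : finType) (E : rel V) (w : V -> V -> R).
Hypothesis E_irr : irreflexive E.
Hypothesis w_ge0 : forall u v, E u v -> 0 <= w u v.

Definition arcw u v : R := if E u v then w u v else 0.
Definition symw u v := arcw u v + arcw v u.
Definition deg v := \sum_u symw v u.

(* j ranges over nat so that colours from 'I_p and 'I_k can be compared. *)
Definition color_deg k (c : {ffun V -> 'I_k}) v (j : nat) :=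
  \sum_(u | u != v) ((j == c u)%:R * symw v u).

Definition mono_weight k (c : {ffun V -> 'I_k}) :=
  \sum_u \sum_v ((c u == c v)%:R * arcw u v).

Definition recolor k (c : {ffun V -> 'I_k}) v j : {ffun V -> 'I_k} :=
  [ffun u => if u == v then j else c u].

Lemma arcw_ge0 u v : 0 <= arcw u v.
Proof. by rewrite /arcw; case: ifP => // /w_ge0. Qed.

Lemma arcw_loop v : arcw v v = 0.
Proof. by rewrite /arcw E_irr. Qed.

Lemma symw_ge0 u v : 0 <= symw u v.
Proof. by rewrite addr_ge0 ?arcw_ge0. Qed.

Lemma deg_ge0 v : 0 <= deg v.
Proof. by rewrite sumr_ge0 // => u _; apply: symw_ge0. Qed.

Lemma sum_deg : \sum_v deg v = 2 * total_weight E w.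
Proof.
have -> : total_weight E w = \sum_u \sum_v arcw u v.
  by apply: eq_bigr => u _; rewrite big_mkcond.
rewrite /deg /symw; under eq_bigr => v _ do rewrite big_split.
by rewrite big_split /= [X in _ + X]exchange_big mulr_natl mulr2n.
Qed.

Lemma total_weight_ge0 : 0 <= total_weight E w.
Proof. by rewrite sumr_ge0 // => u _; rewrite sumr_ge0 // => v /w_ge0. Qed.

Lemma card_heavy_le (m : R) :
  0 <= m -> #|[set v | m <= deg v]|%:R * m <= 2 * total_weight E w.
Proof.
move=> m_ge0; set S := [set v | m <= deg v].
have -> : #|S|%:R * m = \sum_(v in S) m by rewrite sumr_const mulr_natl.
rewrite -sum_deg [X in _ <= X](bigID (mem S)) /=.
apply: ler_wpDr; first by rewrite sumr_ge0 // => v _; apply: deg_ge0.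
by apply: ler_sum => v; rewrite inE.
Qed.

Lemma in_deg_le_color_deg k (c : {ffun V -> 'I_k}) v :
  in_deg E w (color_class c v) v <= color_deg c v (c v).
Proof.
rewrite /in_deg /color_deg big_mkcond [X in _ <= X]big_mkcond /=.
apply: ler_sum => u _.
case: (eqVneq u v) => [->|u_v]; first by rewrite E_irr andbF.
rewrite /color_class inE -val_eqE eq_sym /=.
case: (nat_of_ord (c v) == c u); last by rewrite mul0r.
rewrite mul1r /symw {2}/arcw; case: (E u v); first by rewrite lerDr arcw_ge0.
by rewrite addr0 arcw_ge0.
Qed.

Lemma mono_weight_split k (c : {ffun V -> 'I_k}) v :
  mono_weight c =
  \sum_(u | u != v) \sum_(x | x != v) ((c u == c x)%:R * arcw u x)
  + color_deg c v (c v).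
Proof.
rewrite /mono_weight (bigD1 v) //= (bigD1 v) //= arcw_loop mulr0 add0r.
under [X in _ + X = _]eq_bigr => u _ do rewrite (bigD1 v) //=.
rewrite big_split /= /color_deg /symw.
under [X in _ = _ + X]eq_bigr => u _ do rewrite mulrDr.
rewrite big_split /= addrCA addrA addrC; congr (_ + _).
by rewrite addrC; congr (_ + _); apply: eq_bigr => u _; rewrite eq_sym.
Qed.

Lemma mono_weight_recolor k (c : {ffun V -> 'I_k}) v j :
  mono_weight c <= mono_weight (recolor c v j) ->
  color_deg c v (c v) <= color_deg c v j.
Proof.
rewrite (mono_weight_split c v) (mono_weight_split (recolor c v j) v).
rewrite /recolor ffunE eqxx /color_deg.
under [X in _ <= X + _ -> _]eq_bigr => u u_v.
  by under eq_bigr => x x_v do rewrite !ffunE (negbTE u_v) (negbTE x_v); over.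
rewrite lerD2l.
by under [X in _ <= X -> _]eq_bigr => u u_v do rewrite ffunE (negbTE u_v).
Qed.

Lemma sum_color_deg_le k (c : {ffun V -> 'I_k}) v p :
  (p <= k)%N -> \sum_(j < p) color_deg c v j <= deg v.
Proof.
move=> p_le_k; rewrite (big_ord_widen _ _ p_le_k) /= big_mkcond /=.
apply: (@le_trans _ _ (\sum_(j < k) color_deg c v j)).
  apply: ler_sum => j _; case: ifP => // _.
  by rewrite sumr_ge0 // => u _; rewrite mulr_ge0 ?symw_ge0.
rewrite exchange_big /deg [X in _ <= X](bigD1 v) //= ler_wpDl ?symw_ge0 //.
apply: ler_sum => u _; rewrite -mulr_suml.
suff -> : \sum_(j < k) ((j : nat) == c u)%:R = 1 :> R by rewrite mul1r.
rewrite (bigD1 (c u)) //= eqxx big1 ?addr0 // => j.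
by rewrite -val_eqE => /negbTE ->.
Qed.

Variables (k p : nat) (H : {set V}) (heavy_col : V -> 'I_k).
Hypothesis p_gt0 : (0 < p)%N.
Hypothesis p_le_k : (p <= k)%N.
Hypothesis heavy_col_inj : {in H &, injective heavy_col}.
Hypothesis heavy_col_ge : {in H, forall v, p <= heavy_col v}%N.
Hypothesis deg_light : forall v, v \notin H -> deg v < p%:R.

Definition admissible (c : {ffun V -> 'I_k}) :=
  [forall v, if v \in H then c v == heavy_col v else (c v < p)%N].

Lemma admissible_recolor c v (j : 'I_k) :
  admissible c -> v \notin H -> (j < p)%N -> admissible (recolor c v j).
Proof.
move=> /forallP adm_c vNH j_lt; apply/forallP => u; rewrite ffunE.
by case: (eqVneq u v) => [->|_]; [rewrite (negbTE vNH) | apply: adm_c].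
Qed.

Lemma in_deg_heavy c v :
  admissible c -> v \in H -> in_deg E w (color_class c v) v = 0.
Proof.
move=> /forallP adm_c vH; have := adm_c v; rewrite vH => /eqP cv.
rewrite /in_deg big1 // => u /andP[]; rewrite inE => /eqP cuv Euv.
suff u_v : u = v by rewrite u_v E_irr in Euv.
have := adm_c u; case: ifP => [uH /eqP cu | _].
  by apply: heavy_col_inj; rewrite // -cu -cv cuv.
by rewrite cuv cv ltnNge heavy_col_ge.
Qed.

Lemma in_deg_light_lt1 c v :
  admissible c ->
  (forall c', admissible c' -> mono_weight c <= mono_weight c') ->
  v \notin H -> in_deg E w (color_class c v) v < 1.
Proof.
move=> adm_c c_min vNH.
have p_pos : 0 < p%:R :> R by rewrite ltr0n.
rewrite -(ltr_pM2l p_pos) mulr1; apply: le_lt_trans (deg_light vNH).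
apply: le_trans (sum_color_deg_le c v p_le_k).
rewrite mulr_natl -[X in _ *+ X]card_ord -sumr_const; apply: ler_sum => i _.
apply: (le_trans (in_deg_le_color_deg c v)).
apply: (mono_weight_recolor (j := widen_ord p_le_k i)); apply: c_min.
by apply: admissible_recolor => //=; rewrite ltn_ord.
Qed.

Lemma w_colorable_light_heavy : w_colorable E w k.
Proof.
pose c0 : {ffun V -> 'I_k} :=
  [ffun v => if v \in H then heavy_col v
             else Ordinal (leq_trans p_gt0 p_le_k)].
have adm_c0 : admissible c0.
  by apply/forallP => v; rewrite ffunE; case: (v \in H).
have [c adm_c c_min] := arg_minP (@mono_weight k) adm_c0.
apply/existsP; exists c; apply/forallP => v.
case: (boolP (v \in H)) => [vH | vNH]; last exact: in_deg_light_lt1.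
by rewrite in_deg_heavy ?ltr01.
Qed.

End LocalSearch.

Lemma bigmin_le (I : eqType) (r : seq I) (P : pred I) (F : I -> nat) x0 i :
  i \in r -> P i -> (\big[minn/x0]_(j <- r | P j) F j <= F i)%N.
Proof.
elim: r => // j r IHr; rewrite inE big_cons => /predU1P[-> -> | /IHr le_i Pi].
  exact: geq_minl.
by case: ifP => _; rewrite ?(leq_trans (geq_minr _ _)) ?le_i.
Qed.

Lemma chi_w_le (R : realType) (V : finType) (E : rel V) (w : V -> V -> R) K :
  w_colorable E w K -> (chi_w E w <= K)%N.
Proof.
move=> col; rewrite /chi_w; case: (leqP K #|V|) => [K_le | K_gt].
  rewrite -ltnS in K_le.
  by apply: (@bigmin_le _ _ _ _ _ (Ordinal K_le)) => //; apply: mem_index_enum.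
apply: leq_trans (ltnW K_gt); elim/big_ind: _ => //.
  by move=> x y x_le y_le; rewrite geq_min x_le.
by move=> i _; rewrite -ltnS ltn_ord.
Qed.

Lemma w_colorable_weight_lt_sq (R : realType) (V : finType) (E : rel V)
    (w : V -> V -> R) (n : nat) :
  irreflexive E -> (forall u v, E u v -> 0 <= w u v) ->
  2 * total_weight E w < (n.+1)%:R ^+ 2 -> w_colorable E w (n + n).+1.
Proof.
move=> E_irr w_ge0 W_lt.
pose H := [set v | (n.+1)%:R <= deg E w v].
have card_H : (#|H| <= n)%N.
  rewrite -ltnS -(ltr_nat R) -(@ltr_pM2r _ (n.+1)%:R) ?ltr0n //.
  by rewrite (le_lt_trans (card_heavy_le w_ge0 _)) // -expr2.
pose heavy_col v : 'I_(n + n).+1 := inord (n.+1 + index v (enum H)).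
have heavy_colE v :
    v \in H -> heavy_col v = (n.+1 + index v (enum H))%N :> nat.
  move=> vH; rewrite inordK // addSn ltnS ltn_add2l (leq_trans _ card_H) //.
  by rewrite cardE index_mem mem_enum.
apply: (w_colorable_light_heavy E_irr w_ge0 (p := n.+1) (H := H)
  (heavy_col := heavy_col)).
- by [].
- by rewrite ltnS leq_addr.
- move=> u v uH vH /(congr1 val) /=; rewrite !heavy_colE // => /addnI.
  by apply: (index_inj u); rewrite mem_enum.
- by move=> v vH; rewrite heavy_colE // leq_addr.
- by move=> v; rewrite inE -ltNge.
Qed.

Theorem theorem3p5 (R : realType) (V : finType) (E : rel V) (w : V -> V -> R) :
  weighted_digraph E w ->
  ((chi_w E w)%:R : int) <= 2 * Num.floor (Num.sqrt (2 * total_weight E w)) + 1.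
Proof.
move=> [E_irr w01]; set W := total_weight E w.
have w_ge0 u v : E u v -> 0 <= w u v by move/w01/andP=> [].
have W_ge0 : 0 <= 2 * W by rewrite mulr_ge0 ?total_weight_ge0.
set n := Num.truncn (Num.sqrt (2 * W)).
have floorE : Num.floor (Num.sqrt (2 * W)) = n%:Z.
  by rewrite /n truncn_floor sqrtr_ge0 gez0_abs // floor_ge0 sqrtr_ge0.
have W_lt : 2 * W < (n.+1)%:R ^+ 2.
  rewrite -(sqr_sqrtr W_ge0) ltr_pXn2r ?nnegrE ?sqrtr_ge0 //.
  exact: truncnS_gt.
rewrite floorE; apply: (@le_trans _ _ ((n + n).+1)%:R).
  by rewrite ler_nat chi_w_le // w_colorable_weight_lt_sq.
lia.
Qed.
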